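(* Let $m\ge 2$ and $d\ge 1$ be integers, $n=md$, $a,c>0$, and $q=\frac{ad}{2c}+1$. Let $G_R$ be the $m\times m$ matrix with entries $(G_R)_{kl}=-\frac{d}{2cm}|k-l|(m-|k-l|)$. Then $G_R^{-1}+\frac{a}{m}(mI_m-J_m)$ is invertible and $$M_R:=\Bigl(G_R^{-1}+\frac{a}{m}(mI_m-J_m)\Bigr)^{-1}=\mathrm{circ}(m_1,\dots,m_m),\qquad m_j=\frac{d\,[U_{j-2}(q)+U_{m-j}(q)]}{2c\,[T_m(q)-1]}-\frac{12c+ad(m^2-1)}{12acm},\quad j=1,\dots,m.$$
   Context: $\mathrm{circ}(m_1,\dots,m_m)$ denotes the $m\times m$ circulant matrix whose $(k,l)$ entry is $m_{((l-k)\bmod m)+1}$. $I_m$ is the identity, $J_m$ the all-ones matrix. $T_k,U_k$ are the Chebyshev polynomials of the first and second kind ($T_0=1,T_1=x,U_0=1,U_1=2x$, recurrence $p_{k+1}=2xp_k-p_{k-1}$), with the convention $U_{-1}=0$. ($G_R$ is invertible for $m\ge2$.) *)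

From HB Require Import structures.
From mathcomp Require Import all_boot all_order all_algebra.
Set Implicit Arguments. Unset Strict Implicit. Unset Printing Implicit Defensive.
Import Order.TTheory GRing.Theory Num.Theory.
Local Open Scope ring_scope.

Fixpoint chebT {R : ringType} (x : R) (k : nat) : R :=
  match k with
  | 0 => 1
  | 1 => x
  | S ((S k2) as k1) => 2 * x * chebT x k1 - chebT x k2
  end.

Fixpoint chebU {R : ringType} (x : R) (k : nat) : R :=
  match k with
  | 0 => 1
  | 1 => 2 * x
  | S ((S k2) as k1) => 2 * x * chebU x k1 - chebU x k2
  end.

(* U_k for an integer index k, with the convention U_{-1} = 0
   (indices < -1 never occur in the statement; they are set to 0 too). *)
Definition chebUz {R : ringType} (x : R) (k : int) : R :=
  match k with
  | Posz n => chebU x n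
  | Negz _ => 0
  end.

(* circ(f 1, ..., f m): the m x m matrix whose (k,l) entry (1-indexed) is
   f (((l - k) mod m) + 1).  With 0-indexed k l : 'I_m this is
   f (((l + m - k) %% m) + 1). *)
Definition circ {R : Type} (m : nat) (f : nat -> R) : 'M[R]_m :=
  \matrix_(k < m, l < m) f (((l + m - k) %% m).+1)%N.

Definition GR {R : fieldType} (m d : nat) (c : R) : 'M[R]_m :=
  \matrix_(k < m, l < m)
    (- (d%:R / (2 * c * m%:R)) * (`|(k : nat) - (l : nat)|%N)%:R
       * (m%:R - (`|(k : nat) - (l : nat)|%N)%:R)).

From HB Require Import structures.
From mathcomp Require Import all_boot all_order all_algebra.
From mathcomp Require Import ring lra zify.
Import Order.TTheory GRing.Theory Num.Theory.
Local Open Scope ring_scope.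

(* All matrices involved are circulant over Z/m, and circulants multiply by
   cyclic convolution of their symbols.  G_R has symbol -(d/2cm) t(m-t); the
   second difference of t(m-t) is -2 + 2m[t = 0] and its sum is m(m^2-1)/6,
   so G_R^-1, and hence A = G_R^-1 + (a/m)(mI - J), has a symbol supported on
   {0, 1, -1} plus a constant.  Such a circulant is inverted by an affine
   function of w_t = U_{t-1}(q) + U_{m-t-1}(q): this w satisfies
   w_{t-1} + w_{t+1} = 2q w_t except at t = 0, where the defect is
   2(T_m(q) - 1), which is nonzero because T_m(q) > 1 for q > 1. *)

Section Circulant.
Context {R : comRingType} {n : nat}.
Local Notation m := n.+1.
Implicit Types (f g : 'I_m -> R) (t : 'I_m).

Definition circmx f : 'M[R]_m := \matrix_(k, l) f (l - k).

Definition circ_conv f g t : R := \sum_i f i * g (t - i).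

Lemma circmx_mul f g : circmx f *m circmx g = circmx (circ_conv f g).
Proof.
apply/matrixP => k l; rewrite !mxE /circ_conv (reindex_inj (addIr k)) /=.
apply: eq_bigr => i _; rewrite !mxE addrK; congr (_ * g _).
by rewrite opprD addrA addrAC.
Qed.

Lemma eq_circmx f g : f =1 g -> circmx f = circmx g.
Proof. by move=> fg; apply/matrixP => k l; rewrite !mxE fg. Qed.

Lemma circmx1 : 1%:M = circmx (fun i => (i == 0)%:R).
Proof. by apply/matrixP => k l; rewrite !mxE subr_eq0 eq_sym. Qed.

Lemma sum_delta_sub t (a : 'I_m) g :
  \sum_i (i == a)%:R * g (t - i) = g (t - a).
Proof.
under eq_bigr do rewrite mulr_natl mulrb.
by rewrite -big_mkcond big_pred1_eq.
Qed.

Lemma sum_sub_index t g : \sum_i g (t - i) = \sum_i g i.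
Proof. by rewrite [RHS](reindex_inj (inv_inj (subKr t))). Qed.

Lemma val_ord_sub (k l : 'I_m) : val (l - k) = ((l + m - k) %% m)%N.
Proof. by rewrite /= modnDmr addnBA // ltnW. Qed.

Lemma circ_circmx (h : nat -> R) : circ m h = circmx (fun t => h (t : nat).+1).
Proof. by apply/matrixP => k l; rewrite !mxE val_ord_sub. Qed.

End Circulant.

Section Tridiagonal.
Context {R : comRingType} {n : nat}.
Local Notation m := n.+2.

(* For m = 2 the indices 1 and -1 coincide; both y-terms are then counted. *)
Definition tridiag_sym (x y w : R) (i : 'I_m) : R :=
  x * (i == 0)%:R + y * (i == 1)%:R + y * (i == -1)%:R + w.

Lemma circ_conv_tridiag x y w (g : 'I_m -> R) t :
  circ_conv (tridiag_sym x y w) g t =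
  x * g t + y * (g (t - 1) + g (t + 1)) + w * \sum_i g i.
Proof.
rewrite /circ_conv; under eq_bigr do rewrite !mulrDl -!mulrA.
rewrite !big_split /= -!mulr_sumr !sum_delta_sub sum_sub_index.
by rewrite subr0 opprK mulrDr addrA.
Qed.

Lemma val_ord_subr1 (t : 'I_m) :
  val (t - 1) = (if (t : nat) == 0 then n.+1 else t.-1)%N.
Proof.
rewrite val_ord_sub /=; have := ltn_ord t; case: eqP => [-> _|t_neq0 lt_tm].
  by rewrite modn_small.
rewrite (_ : (t + m - 1 = t.-1 + m)%N); last by lia.
by rewrite modnDr modn_small //; lia.
Qed.

Lemma val_ord_addr1 (t : 'I_m) :
  val (t + 1) = (if (t : nat) == n.+1 then 0 else t.+1)%N.
Proof.
rewrite /= (modn_small (isT : 1 < m)%N) addn1; have := ltn_ord t.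
case: eqP => [-> _|t_neq lt_tm]; first exact: modnn.
by rewrite modn_small //; lia.
Qed.

End Tridiagonal.

Section Chebyshev.
Context {R : comRingType}.
Implicit Type x : R.

Definition chebV x (k : nat) : R := if k is k'.+1 then chebU x k' else 0.

Lemma chebVSS x k : chebV x k.+2 = 2 * x * chebV x k.+1 - chebV x k.
Proof. by case: k => [|[|k]] //=; rewrite mulr1 subr0. Qed.

Lemma chebUz_subr1 x (k : nat) : chebUz x (k%:Z - 1) = chebV x k.
Proof.
case: k => [|k]; first by rewrite sub0r.
by rewrite -[k.+1]addn1 PoszD addrK /chebV addn1.
Qed.

Lemma chebTSS x k : chebT x k.+2 = 2 * x * chebT x k.+1 - chebT x k.
Proof. by []. Qed.

Lemma chebT_chebV x k : 2 * chebT x k.+1 = chebV x k.+2 - chebV x k.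
Proof.
suff : (2 * chebT x k.+1 = chebV x k.+2 - chebV x k) /\
       (2 * chebT x k.+2 = chebV x k.+3 - chebV x k.+1) by case.
elim: k => [|k [IH1 IH2]]; first by split; rewrite /= ?mulr1; ring.
split=> //; rewrite chebTSS mulrBr mulrCA IH2 IH1.
by rewrite (chebVSS x k.+2) (chebVSS x k); ring.
Qed.

Lemma sum_chebV x N :
  (2 * x - 2) * \sum_(i < N.+1) chebV x i = chebV x N.+1 - chebV x N - 1.
Proof.
elim: N => [|N IH]; first by rewrite big_ord1 /= mulr0; ring.
by rewrite big_ord_recr mulrDr IH chebVSS; ring.
Qed.

End Chebyshev.

Arguments chebT : simpl never.
Arguments chebV : simpl never.

Section ChebyshevReal.
Context {R : realDomainType}.
Implicit Type x : R.

Lemma chebV_ge0_incr x k :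
  1 <= x -> 0 <= chebV x k /\ 1 <= chebV x k.+1 - chebV x k.
Proof.
move=> x1; elim: k => [|k [V0 dV]]; first by rewrite /chebV /=; lra.
have V1 : 1 <= chebV x k.+1 by lra.
have : 0 <= (2 * x - 2) * chebV x k.+1 by apply: mulr_ge0; lra.
by rewrite chebVSS; lra.
Qed.

Lemma chebT_gt1 x k : 1 < x -> 1 < chebT x k.+1.
Proof.
move=> x1; have [V0 dV] := chebV_ge0_incr x k (ltW x1).
have [_ dV1] := chebV_ge0_incr x k.+1 (ltW x1).
have : 0 < (2 * x - 2) * chebV x k.+1 by apply: mulr_gt0; lra.
have := chebT_chebV x k; rewrite chebVSS; lra.
Qed.

End ChebyshevReal.

Section ChebyshevSymbol.
Context {R : comRingType} {n : nat}.
Local Notation m := n.+2.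
Implicit Types (x : R) (t : 'I_m).

Definition cheb_sym x t : R := chebV x t + chebV x (m - t).

Lemma cheb_sym_recurrence x t :
  cheb_sym x (t - 1) + cheb_sym x (t + 1) =
  2 * x * cheb_sym x t - 2 * (chebT x m - 1) * (t == 0)%:R.
Proof.
rewrite /cheb_sym val_ord_subr1 val_ord_addr1.
case: t => [[|u] ltum] /=.
  rewrite subn0 subSnn mulr1 mulrBr chebT_chebV (chebVSS x n.+1) /chebV /=; ring.
rewrite eqSS mulr0 subr0; case: (eqVneq u n) => [->|neq_un].
  rewrite subn0 subSnn (_ : (m - n = 2)%N); last by lia.
  by rewrite (chebVSS x n) /chebV /=; ring.
rewrite (_ : (m - u.+1 = (n - u.+1).+2)%N); last by lia.
rewrite (_ : (m - u = (n - u.+1).+3)%N); last by lia.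
rewrite (_ : (m - u.+2 = (n - u.+1).+1)%N); last by lia.
rewrite (chebVSS x u) (chebVSS x (n - u.+1).+1); ring.
Qed.

Lemma sum_cheb_sym x : (2 * x - 2) * \sum_t cheb_sym x t = 2 * (chebT x m - 1).
Proof.
have sum_rev : \sum_(t < m) chebV x (m - t) = \sum_(t < m) chebV x (lift ord0 t).
  rewrite (reindex_inj rev_ord_inj) /=; apply: eq_bigr => t _.
  by rewrite subKn.
have := sum_chebV x m; rewrite big_ord_recl -sum_rev [chebV x 0]/chebV add0r.
rewrite big_split /= mulrDr (sum_chebV x n.+1) => ->.
rewrite mulrBr chebT_chebV; ring.
Qed.

Lemma chebUz_cheb_sym x t :
  chebUz x ((t : nat).+1%:Z - 2) + chebUz x (m%:Z - (t : nat).+1%:Z) = cheb_sym x t.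
Proof.
have shift_t : ((t : nat).+1%:Z - 2 = (t : nat)%:Z - 1 :> int)%R.
  by rewrite -addn1 PoszD -addrA.
have shift_mt : (m%:Z - (t : nat).+1%:Z = (m - t)%N%:Z - 1 :> int)%R.
  rewrite (_ : (m - t = (m - (t : nat).+1) + 1)%N); last by have := ltn_ord t; lia.
  by rewrite PoszD addrK subzn.
by rewrite shift_t shift_mt !chebUz_subr1.
Qed.

End ChebyshevSymbol.

Lemma mulmx1_invmx {R : comUnitRingType} {n} {A B : 'M[R]_n} :
  A *m B = 1%:M -> invmx A = B.
Proof.
move=> AB1; have [unitA _] := mulmx1_unit AB1.
by rewrite -[LHS]mulmx1 -AB1 mulmxA mulVmx // mul1mx.
Qed.

Lemma circmx_tridiag_inv {R : fieldType} {n} {q x y w : R} :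
  2 * y * q = - x -> 2 * y != 0 -> chebT q n.+2 != 1 ->
  x + 2 * y != 0 -> x + 2 * y + n.+2%:R * w != 0 ->
  circmx (tridiag_sym x y w) *m
  circmx (fun t : 'I_n.+2 => cheb_sym q t / (2 * y * (1 - chebT q n.+2))
                   - w / ((x + 2 * y) * (x + 2 * y + n.+2%:R * w))) = 1%:M.
Proof.
move=> yq y20 T1 xy xyw.
have [two0 y0] : 2 != 0 :> R /\ y != 0 by apply/andP; rewrite -negb_or -mulf_eq0.
have q1 : 2 * q - 2 != 0.
  apply: contraNneq xy => q1; rewrite -[x]opprK -yq; apply/eqP.
  by transitivity (- y * (2 * q - 2)); [ring | rewrite q1 mulr0].
have sum_sym : \sum_(i : 'I_n.+2) cheb_sym q i = 2 * (chebT q n.+2 - 1) / (2 * q - 2).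
  by rewrite -sum_cheb_sym mulrAC mulfV // mul1r.
rewrite circmx_mul circmx1; apply: eq_circmx => t.
rewrite circ_conv_tridiag sumrB -mulr_suml sum_sym sumr_const card_ord.
set beta := w / _; rewrite -[beta *+ _]mulr_natl.
rewrite (_ : _ - beta + _ = (cheb_sym q (t - 1) + cheb_sym q (t + 1))
   / (2 * y * (1 - chebT q n.+2)) - 2 * beta); last by ring.
rewrite cheb_sym_recurrence /beta -[x]opprK -yq.
rewrite -[x]opprK -yq in xy xyw.
field.
by rewrite -natrD add2n xyw xy subr_eq0 eq_sym T1 y0 two0 q1.
Qed.

Lemma sum_natr_mul_sub (R : comRingType) (M : R) N :
  6 * \sum_(i < N) (i : nat)%:R * (M - (i : nat)%:R) =
  3 * M * N%:R * (N%:R - 1) - (N%:R - 1) * N%:R * (2 * N%:R - 1).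
Proof.
elim: N => [|N IH]; first by rewrite big_ord0; ring.
by rewrite big_ord_recr /= mulrDr IH -addn1 natrD; ring.
Qed.

Section Parabola.
Context {R : comRingType} {n : nat}.
Local Notation m := n.+2.
Implicit Type t : 'I_m.

Definition parab t : R := (t : nat)%:R * (m%:R - (t : nat)%:R).

Lemma sum_parab : 6 * \sum_t parab t = m%:R * (m%:R ^+ 2 - 1).
Proof. by rewrite sum_natr_mul_sub; ring. Qed.

Lemma parab_recurrence t :
  parab (t - 1) + parab (t + 1) = 2 * parab t - 2 + 2 * m%:R * (t == 0)%:R.
Proof.
rewrite /parab val_ord_subr1 val_ord_addr1.
case: t => [[|u] ltum] /=; first by rewrite !mulrS; ring.
case: (eqVneq u n) => [->|neq_un]; first by rewrite eqxx !mulrS; ring.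
by rewrite eqSS (negPf neq_un) !mulrS; ring.
Qed.

End Parabola.

Lemma sqr_natr_sub1_neq0 {R : numDomainType} k : (1 < k)%N -> k%:R ^+ 2 - 1 != 0 :> R.
Proof. by move=> k_gt1; rewrite subr_eq0 -natrX pnatr_eq1 expnS; lia. Qed.

Section GreenMatrix.
Context {R : numFieldType} {n : nat}.
Local Notation m := n.+2.

Lemma GR_circmx d (c : R) :
  GR m d c = circmx (fun t => - (d%:R / (2 * c * m%:R)) * parab t).
Proof.
apply/matrixP => k l; rewrite !mxE /parab val_ord_sub -mulrA; congr (_ * _).
have := ltn_ord k; have := ltn_ord l; case: (leqP k l) => [le_kl|lt_lk] ltl ltk.
  rewrite distnEr // (_ : (l + m - k = (l - k) + m)%N); last by lia.
  by rewrite modnDr modn_small //; lia.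
rewrite distnEl ?(ltnW lt_lk) // modn_small; last by lia.
rewrite (_ : (l + m - k = m - (k - l))%N); last by lia.
by rewrite !natrB; [ring | lia ..].
Qed.

Lemma GR_left_inv d (c : R) : (0 < d)%N -> c != 0 ->
  circmx (tridiag_sym (2 * c / d%:R) (- (c / d%:R))
            (- (12 * c / (d%:R * m%:R * (m%:R ^+ 2 - 1))))) *m GR m d c = 1%:M.
Proof.
move=> d_gt0 c0; have d0 : d%:R != 0 :> R by rewrite pnatr_eq0 -lt0n.
rewrite GR_circmx circmx_mul circmx1; apply: eq_circmx => t.
have sum_p : \sum_(i : 'I_m) parab i = m%:R * (m%:R ^+ 2 - 1) / 6 :> R.
  by rewrite -sum_parab mulrC mulKf // pnatr_eq0.
rewrite circ_conv_tridiag -mulr_sumr -mulrDr parab_recurrence sum_p.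
by field; rewrite -natrD add2n pnatr_eq0 sqr_natr_sub1_neq0 // c0 d0.
Qed.

Lemma GR_inv_add_circmx d (a c : R) : (0 < d)%N -> c != 0 ->
  invmx (GR m d c) + (a / m%:R) *: (m%:R *: 1%:M - const_mx 1) =
  circmx (tridiag_sym (2 * c / d%:R + a) (- (c / d%:R))
            (- (12 * c / (d%:R * m%:R * (m%:R ^+ 2 - 1))) - a / m%:R)).
Proof.
move=> d_gt0 c0; have d0 : d%:R != 0 :> R by rewrite pnatr_eq0 -lt0n.
rewrite (mulmx1_invmx (mulmx1C (GR_left_inv d c d_gt0 c0))).
apply/matrixP => k l; rewrite !mxE /tridiag_sym subr_eq0 eq_sym.
by field; rewrite -natrD add2n pnatr_eq0 sqr_natr_sub1_neq0 // d0.
Qed.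

End GreenMatrix.

Section PerturbedInverse.
Context {R : realFieldType} {n : nat}.
Local Notation m := n.+2.
Variables (d : nat) (a c : R).
Hypotheses (d_gt0 : (0 < d)%N) (a_gt0 : 0 < a) (c_gt0 : 0 < c).

Let q := a * d%:R / (2 * c) + 1.

(* The paper's m_{t+1}. *)
Definition MR_entry (t : 'I_m) : R :=
  d%:R * cheb_sym q t / (2 * c * (chebT q m - 1))
  - (12 * c + a * d%:R * (m%:R ^+ 2 - 1)) / (12 * a * c * m%:R).

Lemma GR_inv_add_mul_MR :
  circmx (tridiag_sym (2 * c / d%:R + a) (- (c / d%:R))
            (- (12 * c / (d%:R * m%:R * (m%:R ^+ 2 - 1))) - a / m%:R))
  *m circmx MR_entry = 1%:M.
Proof.
have [c0 a0] : c != 0 /\ a != 0 by rewrite !gt_eqF.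
have d0 : d%:R != 0 :> R by rewrite pnatr_eq0 -lt0n.
have m0 : m%:R != 0 :> R by rewrite pnatr_eq0.
have m21 : m%:R ^+ 2 - 1 != 0 :> R by rewrite sqr_natr_sub1_neq0.
have T1 : chebT q m != 1.
  by rewrite gt_eqF // chebT_gt1 // /q ltrDr !(divr_gt0, mulr_gt0) // ltr0n.
set x := _ + a; set y := - _; set w := _ - _.
have yq : 2 * y * q = - x by rewrite /x /y /q; field; rewrite d0 c0.
have y20 : 2 * y != 0.
  by rewrite /y mulrN oppr_eq0 gt_eqF // mulr_gt0 // divr_gt0 // ltr0n.
have xy : x + 2 * y = a by rewrite /x /y; ring.
have xyw : x + 2 * y + m%:R * w = - (12 * c / (d%:R * (m%:R ^+ 2 - 1))).
  by rewrite /x /y /w; field; rewrite -natrD add2n m21 d0 m0.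
have xyw0 : - (12 * c / (d%:R * (m%:R ^+ 2 - 1))) != 0.
  by rewrite oppr_eq0 !(mulf_neq0, invr_eq0) // pnatr_eq0.
have := circmx_tridiag_inv (w := w) yq y20 T1; rewrite xyw xy => /(_ a0 xyw0).
move=> <-; congr (_ *m _); apply: eq_circmx => t; rewrite /MR_entry /y /w.
by field; rewrite -natrD add2n m0 c0 a0 m21 d0 !subr_eq0 T1 eq_sym T1.
Qed.

End PerturbedInverse.

Theorem lemma4p2 (R : realFieldType) (m d : nat) (a c : R) :
  (2 <= m)%N -> (1 <= d)%N -> 0 < a -> 0 < c ->
  let q := a * d%:R / (2 * c) + 1 in
  let G := GR m d c in
  let A := invmx G + (a / m%:R) *: (m%:R *: (1%:M : 'M[R]_m) - const_mx 1) in
  G \in unitmx /\ A \in unitmx /\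
  invmx A =
    circ m (fun j : nat =>
      d%:R * (chebUz q (j%:Z - 2) + chebUz q (m%:Z - j%:Z))
        / (2 * c * (chebT q m - 1))
      - (12 * c + a * d%:R * (m%:R ^+ 2 - 1)) / (12 * a * c * m%:R)).
Proof.
case: m => [|[|n]] // _ d_gt0 a_gt0 c_gt0 q G A.
have c0 : c != 0 by rewrite gt_eqF.
have [_ unitG] := mulmx1_unit (GR_left_inv (n := n) d c d_gt0 c0).
have invA := GR_inv_add_mul_MR (n := n) d a c d_gt0 a_gt0 c_gt0.
rewrite /A GR_inv_add_circmx //; split=> //; split; first by case: (mulmx1_unit invA).
rewrite (mulmx1_invmx invA) circ_circmx; apply: eq_circmx => t.
by rewrite chebUz_cheb_sym.
Qed.
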